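(* Let $G$ be an unweighted undirected $n$-vertex graph, let $A$ be a $\beta$-additive clustering-based spanner of $G$ with clustering $\mathcal{C}$ and center map $\mathrm{cnt}$, and let $M$ be an $\alpha$-multiplicative EFT spanner of $G$. Let $H$ be the graph returned by Algorithm 2 (described in the context). Then $H$ has $O(|E(A)|+|E(M)|+n+|\mathcal{C}|^2)$ edges, and $H$ is a $(2\beta+\max\{2,\alpha-3\})$-additive EFT spanner of $G$, i.e. for every $e\in E(G)$ and all $s,t$ connected in $G-e$, $d_{H-e}(s,t)\le d_{G-e}(s,t)+2\beta+\max\{2,\alpha-3\}$.
   Context: $d_X$ is shortest-path distance in $X$; $|\pi|$ is the number of edges of path $\pi$. An $\alpha$-multiplicative EFT spanner is a subgraph $M$ with $d_{M-e}(s,t)\le\alpha\,d_{G-e}(s,t)$ for all edges $e$ and vertices $s,t$. A clustering of $G$ is a partition $\mathcal{C}$ of a subset of $V(G)$ into clusters; each cluster $C$ has a designated center vertex in $C$, and for a clustered vertex $v$, $\mathrm{cnt}(v)$ is the center of its cluster; every non-center clustered vertex is adjacent in $G$ to its center. Unclustered vertices are those in no cluster. A $\beta$-additive spanner $A$ (i.e. $d_A(u,v)\le d_G(u,v)+\beta$ for all $u,v$) is clustering-based with clustering $\mathcal{C}$ if: (i) $A$ contains all edges of $G$ incident to unclustered vertices; (ii) $A$ contains every edge $(v,\mathrm{cnt}(v))$ for clustered $v\neq\mathrm{cnt}(v)$; (iii) for all $u,v\in V(G)$ with $v$ clustered there is a path $\tilde\pi(u,v)$ in $A$ satisfying one of: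 (P1) $|\tilde\pi(u,v)|\le d_G(u,v)+\beta-2$; (P2) $|\tilde\pi(u,v)|=d_G(u,v)+\beta-1$ and either $v=\mathrm{cnt}(v)$ or the last edge of $\tilde\pi(u,v)$ is $(\mathrm{cnt}(v),v)$; (P3) $|\tilde\pi(u,v)|=d_G(u,v)+\beta$, $v\ne\mathrm{cnt}(v)$, and the last edge of $\tilde\pi(u,v)$ is $(\mathrm{cnt}(v),v)$. For clusters $C,C'$ let $\delta(C,C')$ be the set of edges of $G$ with one endpoint in $C$ and the other in $C'$. Algorithm 2: start with $E'=\emptyset$. For every cluster $C$ and every $v\in C$, if there is an edge $(v,x)\in E(G)$ with $x\in C\setminus\{\mathrm{cnt}(v)\}$, add one such edge to $E'$. For every pair of distinct clusters $C,C'$: if $\delta(C,C')$ contains two vertex-disjoint edges, add two such edges to $E'$; else if it contains two distinct edges, add two such edges; otherwise add all of $\delta(C,C')$ (at most one edge). Return $H=(V(G),E'\cup E(M)\cup E(A))$. *)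

(* Graphs: vertex set = a finType T, edge set = {set {set T}}
   whose elements are 2-element sets {u,v}. *)
From HB Require Import structures.
From mathcomp Require Import all_boot all_order all_algebra.
From Stdlib Require Import ClassicalEpsilon.
Set Implicit Arguments. Unset Strict Implicit. Unset Printing Implicit Defensive.
Import Order.TTheory GRing.Theory Num.Theory.

Section Graphs.
Variable T : finType.

Definition simple_graph (E : {set {set T}}) : Prop :=
  forall e, e \in E -> #|e| = 2.

Definition adj (E : {set {set T}}) : rel T := fun u v => [set u; v] \in E.

(* a (simple) path from s to t with edges in E; its vertices are s :: p,
   its number of edges is size p *)
Definition is_path (E : {set {set T}}) (s t : T) (p : seq T) : bool :=
  [&& path (adj E) s p, last s p == t & uniq (s :: p)].

Definition pathn (E : {set {set T}}) (s t : T) (k : nat) : bool :=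
  [exists p : k.-tuple T, is_path E s t p].

Definition connected (E : {set {set T}}) (s t : T) : Prop :=
  exists k, pathn E s t k.

(* shortest-path distance d_E(s,t) (defined as 0 when s,t are disconnected;
   only used for connected pairs) *)
Definition dist (E : {set {set T}}) (s t : T) : nat :=
  match excluded_middle_informative (connected E s t) with
  | left h => ex_minn h
  | right _ => 0
  end.

Definition last_edge (s : T) (p : seq T) (c v : T) : Prop :=
  exists q, s :: p = rcons (rcons q c) v.

Definition cnt (cl : {set {set T}}) (center : {set T} -> T) (v : T) : T :=
  center (pblock cl v).

Definition clustering (G : {set {set T}}) (cl : {set {set T}})
    (center : {set T} -> T) : Prop :=
  [/\ trivIset cl, set0 \notin cl,
      (forall C, C \in cl -> center C \in C) &
      (forall v, v \in cover cl -> v != cnt cl center v ->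
                 [set v; cnt cl center v] \in G)].

Definition additive_spanner (G A : {set {set T}}) (beta : nat) : Prop :=
  A \subset G /\
  forall u v, connected G u v ->
    connected A u v /\ dist A u v <= dist G u v + beta.

Definition clustering_based (G A : {set {set T}}) (beta : nat)
    (cl : {set {set T}}) (center : {set T} -> T) : Prop :=
  [/\ additive_spanner G A beta,
      clustering G cl center,
      (forall u v, [set u; v] \in G -> u \notin cover cl -> [set u; v] \in A),
      (forall v, v \in cover cl -> v != cnt cl center v ->
                 [set v; cnt cl center v] \in A) &
      (forall u v, v \in cover cl -> connected G u v ->
         exists p, is_path A u v p /\
           [\/ size p + 2 <= dist G u v + beta,
               size p + 1 = dist G u v + beta /\
                 (v = cnt cl center v \/ last_edge u p (cnt cl center v) v)
             | size p = dist G u v + beta /\ v != cnt cl center v /\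
                 last_edge u p (cnt cl center v) v])].

Definition mult_EFT_spanner (R : realFieldType) (G M : {set {set T}})
    (alpha : R) : Prop :=
  M \subset G /\
  forall e, e \in G -> forall s t, connected (G :\ e) s t ->
    connected (M :\ e) s t /\
    ((dist (M :\ e) s t)%:R <= alpha * (dist (G :\ e) s t)%:R)%R.

Definition delta (G : {set {set T}}) (C C' : {set T}) : {set {set T}} :=
  [set e in G | [exists u in C, exists w in C', e == [set u; w]]].

(* Algorithm 2, step 1: the (optional) edge chosen for clustered v *)
Definition alg2_pick_spec (G : {set {set T}}) (cl : {set {set T}})
    (center : {set T} -> T) (pick : T -> {set {set T}}) : Prop :=
  forall v, v \in cover cl ->
    if [exists x in pblock cl v :\ cnt cl center v, [set v; x] \in G]
    then exists2 x, x \in pblock cl v :\ cnt cl center v &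
           [set v; x] \in G /\ pick v = [set [set v; x]]
    else pick v = set0.

(* Algorithm 2, step 2: edges chosen for an (unordered) pair of clusters *)
Definition alg2_pair_spec (G : {set {set T}}) (cl : {set {set T}})
    (pp : {set T} -> {set T} -> {set {set T}}) : Prop :=
  forall C C', C \in cl -> C' \in cl -> C != C' ->
    pp C C' = pp C' C /\
    let D := delta G C C' in
    if [exists e1 in D, exists e2 in D, [disjoint e1 & e2]] then
      exists e1 e2, [/\ e1 \in D, e2 \in D, [disjoint e1 & e2] &
                        pp C C' = [set e1; e2]]
    else if [exists e1 in D, exists e2 in D, e1 != e2] then
      exists e1 e2, [/\ e1 \in D, e2 \in D, e1 != e2 &
                        pp C C' = [set e1; e2]]
    else pp C C' = D.

Definition alg2_Eprime (cl : {set {set T}}) (pick : T -> {set {set T}})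
    (pp : {set T} -> {set T} -> {set {set T}}) : {set {set T}} :=
  (\bigcup_(v in cover cl) pick v) :|:
  (\bigcup_(C in cl) \bigcup_(C' in cl | C' != C) pp C C').

Definition alg2_H (A M : {set {set T}}) (cl : {set {set T}})
    (pick : T -> {set {set T}})
    (pp : {set T} -> {set T} -> {set {set T}}) : {set {set T}} :=
  alg2_Eprime cl pick pp :|: M :|: A.

End Graphs.

(* Fix the failing edge e and a shortest path s = z_0, ..., z_D = t of G - e.
   The clustering-based spanner A gives, for every k, a path from s to z_k of
   length at most k + beta and one from t to z_k of length at most D - k + beta,
   with (P1)-(P3) when z_k is clustered.  The first is trivial (hence avoids e)
   for k = 0 and the second for k = D, so some index either has both paths
   avoiding e (concatenate them), or both using e (two paths crossing e towards
   the same vertex recombine into an e-free walk two edges shorter), or an s-path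
   to z_i and a t-path to z_(i+1) avoiding e.  In the last case the edge
   z_i z_(i+1) lies in H unless both ends are clustered; if the center edge of an
   end is e, (P1) leaves two units of slack for the alpha-detour of M between
   them, and otherwise the paths reach the two centers, which Algorithm 2 joins
   by a path of length 3 avoiding e.  For the size, step 1 adds at most one edge
   per vertex and step 2 at most two per pair of clusters. *)

From HB Require Import structures.
From mathcomp Require Import all_boot all_order all_algebra.
From mathcomp Require Import zify lra.
From Stdlib Require Import Classical ClassicalEpsilon.
Import Order.TTheory GRing.Theory Num.Theory.
Set Implicit Arguments. Unset Strict Implicit. Unset Printing Implicit Defensive.

Section Walks.
Variable T : finType.
Implicit Types (E F : {set {set T}}) (e : {set T}) (a b c : T) (p : seq T).

Definition walk E a b n :=
  exists p, [/\ path (adj E) a p, last a p = b & size p <= n].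

Lemma adjC E : symmetric (adj E).
Proof. by move=> a b; rewrite /adj setUC. Qed.

Lemma walk0 E a n : walk E a a n.
Proof. by exists [::]. Qed.

Lemma walk1 E a b : [set a; b] \in E -> walk E a b 1.
Proof. by move=> ab; exists [:: b]; rewrite /= andbT. Qed.

Lemma walk_cat E a b c n m : walk E a b n -> walk E b c m -> walk E a c (n + m).
Proof.
move=> [p [h1 h2 h3]] [q [k1 k2 k3]]; exists (p ++ q); split.
- by rewrite cat_path h1 h2 k1.
- by rewrite last_cat h2.
- by rewrite size_cat leq_add.
Qed.

Lemma walk_rev E a b n : walk E a b n -> walk E b a n.
Proof.
move=> [p [h1 h2 h3]]; exists (rev (belast a p)); split.
- by rewrite -h2 rev_path; apply: sub_path h1 => x y; rewrite /= adjC.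
- by case: p h1 h2 {h3} => [|x p] //= _ <-; rewrite rev_cons last_rcons.
- by rewrite size_rev size_belast.
Qed.

Lemma walk_sub E F a b n : E \subset F -> walk E a b n -> walk F a b n.
Proof.
move=> sEF [p [h1 h2 h3]]; exists p; split=> //.
by apply: sub_path h1 => x y /(subsetP sEF).
Qed.

Lemma walk_dist E a b n : walk E a b n -> connected E a b /\ dist E a b <= n.
Proof.
move=> [p [h1 h2 h3]]; case: (shortenP h1) h2 => q hq uq sub_qp hl.
have pq : pathn E a b (size q).
  by apply/existsP; exists (in_tuple q); rewrite /is_path hq uq hl eqxx.
have cab : connected E a b by exists (size q).
split=> //; rewrite /dist; case: excluded_middle_informative => // c_ab.
case: ex_minnP => m _ /(_ _ pq) mq; apply: leq_trans mq (leq_trans _ h3).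
by apply: uniq_leq_size => //; case/andP: uq.
Qed.

Lemma dist_is_path E a b : connected E a b ->
  exists p, is_path E a b p /\ size p = dist E a b.
Proof.
move=> cab; rewrite /dist; case: excluded_middle_informative => // c_ab.
by case: ex_minnP => m /existsP [q hq] _; exists q; rewrite size_tuple.
Qed.

Lemma is_path_walk E a b p : is_path E a b p -> walk E a b (size p).
Proof. by case/and3P => h1 /eqP h2 _; exists p. Qed.

Lemma is_path_loop_nil E a p : is_path E a a p -> p = [::].
Proof.
case: p => [|x p] // /and3P [_ /eqP hl]; rewrite cons_uniq => /andP [+ _].
by rewrite -{1}hl /= mem_last.
Qed.

Lemma dist_edge E a b : [set a; b] \in E -> a != b -> dist E a b = 1.
Proof.
move=> ab nab; have [cab d_le1] := walk_dist (walk1 ab).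
have [p [/and3P [_ /eqP hl _] hp]] := dist_is_path cab.
apply/eqP; rewrite eqn_leq d_le1 -hp lt0n size_eq0.
by apply: contra nab => /eqP p0; rewrite -hl p0.
Qed.

Lemma walk_along E a p k : path (adj E) a p -> k <= size p ->
  walk E a (nth a (a :: p) k) k /\ walk E (nth a (a :: p) k) (last a p) (size p - k).
Proof.
move=> hp hk; move: hp; rewrite -{1}(cat_take_drop k p) cat_path => /andP [h1 h2].
have hl : last a (take k p) = nth a (a :: p) k.
  rewrite (last_nth a) size_take_min (minn_idPl hk).
  by rewrite -[a :: take k p]/(take k.+1 (a :: p)) nth_take.
split; first by exists (take k p); rewrite -hl size_take_min geq_minl.
by exists (drop k p); rewrite -hl -last_cat cat_take_drop size_drop.
Qed.

Lemma is_path_avoid_walk E e a b p :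
  is_path E a b p -> path (adj (E :\ e)) a p -> walk (E :\ e) a b (size p).
Proof. by case/and3P=> _ /eqP ab _ ap; exists p. Qed.

Lemma last_edge_walk E a p c b : last_edge a p c b -> path (adj E) a p ->
  [/\ adj E c b, 0 < size p & walk E a c (size p).-1].
Proof.
case=> -[|x q] /=.
  by case=> -> ->; rewrite /= andbT => cb; split=> //; apply: walk0.
case=> -> ->; rewrite rcons_path last_rcons => /andP [ac cb].
split=> //; first by rewrite size_rcons.
by exists (rcons q c); rewrite last_rcons !size_rcons.
Qed.

End Walks.

Section Detours.
Variable T : finType.
Implicit Types (E : {set {set T}}) (e : {set T}) (a v x : T) (p : seq T).

Lemma adjD1 E e a v : adj (E :\ e) a v = ([set a; v] != e) && adj E a v.
Proof. by rewrite /adj in_setD1. Qed.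

Lemma split_at_first_use E e a p :
  path (adj E) a p -> ~~ path (adj (E :\ e)) a p ->
  exists p1 y p2, [/\ p = p1 ++ y :: p2, path (adj (E :\ e)) a p1,
    [set last a p1; y] = e & path (adj E) y p2].
Proof.
elim: p a => [|x p IHp] a //= /andP [ax xp].
rewrite adjD1 ax andbT; have [axe _ | axe /= not_xp] := eqVneq [set a; x] e.
  by exists [::], x, p.
have [p1 [y [p2 [-> h1 h2 h3]]]] := IHp x xp not_xp.
by exists (x :: p1), y, p2; rewrite /= adjD1 axe ax.
Qed.

Lemma path_avoid_endpoint E e x a p : x \in e -> x \notin a :: p ->
  path (adj E) a p -> path (adj (E :\ e)) a p.
Proof.
move=> xe; elim: p a => [|y p IHp] a //=; rewrite !inE negb_or => /andP [xa xyp].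
case/andP=> ay yp; rewrite IHp // andbT adjD1 ay andbT.
apply: contraNneq xa => ae; move: xe xyp; rewrite -ae !inE negb_or.
by case/orP=> /eqP ->; rewrite eqxx.
Qed.

Lemma simple_path_detour E e a v p :
  is_path E a v p -> ~~ path (adj (E :\ e)) a p ->
  exists x y n1 n2, [/\ e = [set x; y], walk (E :\ e) a x n1,
    walk (E :\ e) y v n2 & n1 + n2 + 1 <= size p].
Proof.
case/and3P=> ap /eqP av uap not_ap.
have [p1 [y [p2 [def_p h1 h2 h3]]]] := split_at_first_use ap not_ap.
exists (last a p1), y, (size p1), (size p2); split=> //.
- by exists p1.
- exists p2; split=> //; last by move: av; rewrite def_p last_cat.
  apply: (path_avoid_endpoint (x := last a p1)) h3; first by rewrite -h2 set21.
  move: uap; rewrite def_p -cat_cons cat_uniq => /and3P [_ + _].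
  by apply: contra => x_p2; apply/hasP; exists (last a p1) => //; apply: mem_last.
- by rewrite def_p size_cat /= addn1 addnS.
Qed.

(* Both paths cross e = {x, y}.  If they reach the same end of e first, join
   their parts before the crossing; otherwise go from s along P to x, along Q
   after its crossing to v, back along P after its crossing to y, and along Q
   back to t. *)
Lemma crossing_paths_walk E e s t v P Q :
  is_path E s v P -> ~~ path (adj (E :\ e)) s P ->
  is_path E t v Q -> ~~ path (adj (E :\ e)) t Q ->
  exists n, walk (E :\ e) s t n /\ n + 2 <= size P + size Q.
Proof.
move=> sP not_sP tQ not_tQ.
have [x [y [n1 [n2 [exy sx yv hP]]]]] := simple_path_detour sP not_sP.
have [x' [y' [m1 [m2 [exy' tx' y'v hQ]]]]] := simple_path_detour tQ not_tQ.
have [xx'|xx'] := eqVneq x x'.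
  by exists (n1 + m1); split; [apply: walk_cat sx (walk_rev _); rewrite xx' | lia].
have [xy' x'y] : x = y' /\ x' = y.
  have : x \in [set x'; y'] by rewrite -exy' exy set21.
  have : x' \in [set x; y] by rewrite -exy exy' set21.
  by rewrite !inE (negbTE xx') eq_sym (negbTE xx') => /eqP -> /eqP ->.
rewrite -xy' in y'v; rewrite x'y in tx'.
exists (n1 + m2 + n2 + m1); split; last by lia.
apply: walk_cat (walk_rev tx'); apply: walk_cat (walk_rev yv).
exact: walk_cat sx y'v.
Qed.

End Detours.

Section TwoSets.
Variable T : finType.
Implicit Types (C : {set T}) (a b c x y z : T).

Lemma set2_mem_sub C a b z : a \in C -> b \in C -> z \in [set a; b] -> z \in C.
Proof. by move=> aC bC /set2P [] ->. Qed.

Lemma set2_inj_l c : injective (fun x => [set x; c]).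
Proof.
move=> x1 x2 /= E; have : x1 \in [set x2; c] by rewrite -E set21.
case/set2P=> // x1c; have : x2 \in [set x1; c] by rewrite E set21.
by rewrite x1c setUid => /set1P.
Qed.

Lemma deltaP (G : {set {set T}}) C C' f : f \in delta G C C' ->
  exists x y, [/\ x \in C, y \in C' & f = [set x; y]].
Proof.
by rewrite inE => /andP [_ /exists_inP [x xC /exists_inP [y yC' /eqP ->]]]; exists x, y.
Qed.

End TwoSets.

Section ClusterPair.
Variables (T : finType) (Cu Cw : {set T}) (cu cw : T) (e : {set T}).
Hypotheses (disj_C : [disjoint Cu & Cw]) (cu_Cu : cu \in Cu) (cw_Cw : cw \in Cw).

(* (x, y) is blocked when e is one of the edges of the detour cu - x - y - cw. *)
Definition blocked x y := [|| [set x; y] == e, [set x; cu] == e | [set y; cw] == e].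

Lemma notin_both z : z \in Cu -> z \in Cw -> False.
Proof. by move=> zu; rewrite (disjointFr disj_C zu). Qed.

Lemma cross_set2_inj x1 y1 x2 y2 : x1 \in Cu -> x2 \in Cu -> y1 \in Cw -> y2 \in Cw ->
  [set x1; y1] = [set x2; y2] -> (x1, y1) = (x2, y2).
Proof.
move=> x1u x2u y1w y2w E.
have : x1 \in [set x2; y2] by rewrite -E set21.
case/set2P=> [->|x1y2]; last by case: (notin_both x1u); rewrite x1y2.
have : y1 \in [set x2; y2] by rewrite -E set22.
by case/set2P=> [y1x2|-> //]; case: (notin_both x2u); rewrite -y1x2.
Qed.

Lemma blocked_share x1 y1 x2 y2 : x1 \in Cu -> x2 \in Cu -> y1 \in Cw -> y2 \in Cw ->
  (x1, y1) != (x2, y2) -> blocked x1 y1 -> blocked x2 y2 ->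
  (x1 = x2 /\ [set x1; cu] = e) \/ (y1 = y2 /\ [set y1; cw] = e).
Proof.
move=> x1u x2u y1w y2w neq12.
case/or3P=> /eqP E1; case/or3P=> /eqP E2.
- by move: neq12; rewrite (cross_set2_inj x1u x2u y1w y2w (etrans E1 (esym E2))) eqxx.
- by case: (notin_both _ y1w); apply: (set2_mem_sub x2u cu_Cu); rewrite E2 -E1 set22.
- by case: (notin_both x1u); apply: (set2_mem_sub y2w cw_Cw); rewrite E2 -E1 set21.
- by case: (notin_both _ y2w); apply: (set2_mem_sub x1u cu_Cu); rewrite E1 -E2 set22.
- by left; split=> //; apply: set2_inj_l (etrans E1 (esym E2)).
- by case: (notin_both cu_Cu); apply: (set2_mem_sub y2w cw_Cw); rewrite E2 -E1 set22.
- by case: (notin_both x2u); apply: (set2_mem_sub y1w cw_Cw); rewrite E1 -E2 set21.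
- by case: (notin_both cu_Cu); apply: (set2_mem_sub y1w cw_Cw); rewrite E1 -E2 set22.
- by right; split=> //; apply: set2_inj_l (etrans E1 (esym E2)).
Qed.

Definition usable (S : {set {set T}}) :=
  exists x y, [/\ [set x; y] \in S, x \in Cu, y \in Cw & ~~ blocked x y].

Lemma usable_pair x1 y1 x2 y2 : x1 \in Cu -> x2 \in Cu -> y1 \in Cw -> y2 \in Cw ->
  (x1, y1) != (x2, y2) -> ~ (x1 = x2 /\ [set x1; cu] = e) ->
  ~ (y1 = y2 /\ [set y1; cw] = e) -> usable [set [set x1; y1]; [set x2; y2]].
Proof.
move=> x1u x2u y1w y2w neq12 not_x not_y.
case b1: (blocked x1 y1); last by exists x1, y1; rewrite set21 b1.
case b2: (blocked x2 y2); last by exists x2, y2; rewrite set22 b2.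
by case: (blocked_share x1u x2u y1w y2w neq12 b1 b2).
Qed.

Lemma usable_disjoint x1 y1 x2 y2 : x1 \in Cu -> x2 \in Cu -> y1 \in Cw -> y2 \in Cw ->
  [disjoint [set x1; y1] & [set x2; y2]] -> usable [set [set x1; y1]; [set x2; y2]].
Proof.
move=> x1u x2u y1w y2w dis.
have shared z : z \in [set x1; y1] -> z \in [set x2; y2] -> False.
  by move=> z1; rewrite (disjointFr dis z1).
apply: usable_pair => //.
- by apply/eqP=> -[x12 _]; apply: (shared x1); rewrite ?x12 set21.
- by case=> x12 _; apply: (shared x1); rewrite ?x12 set21.
- by case=> y12 _; apply: (shared y1); rewrite ?y12 set22.
Qed.

Lemma disjoint_crossing_pairs x y u w : x \in Cu -> u \in Cu -> y \in Cw -> w \in Cw ->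
  x != u -> y != w -> [disjoint [set x; y] & [set u; w]].
Proof.
move=> xu uu yw ww nxu nyw.
rewrite disjoints_subset subUset !sub1set !inE !negb_or nxu nyw andbT /=.
by apply/andP; split; apply/eqP=> E; [apply: (notin_both xu) | apply: (notin_both uu)];
  rewrite ?E // -E.
Qed.

(* Both pairs go through u or w, whose center edges are not e. *)
Lemma usable_meeting u w x1 y1 x2 y2 : u \in Cu -> w \in Cw -> ~~ blocked u w ->
  x1 \in Cu -> x2 \in Cu -> y1 \in Cw -> y2 \in Cw ->
  [set x1; y1] != [set x2; y2] ->
  ~~ [disjoint [set x1; y1] & [set u; w]] -> ~~ [disjoint [set x2; y2] & [set u; w]] ->
  usable [set [set x1; y1]; [set x2; y2]].
Proof.
move=> uu ww nb x1u x2u y1w y2w neq12 meet1 meet2.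
have through x y : x \in Cu -> y \in Cw -> ~~ [disjoint [set x; y] & [set u; w]] ->
    x = u \/ y = w.
  move=> xu yw; have [->|nxu] := eqVneq x u; first by left.
  have [->|nyw] := eqVneq y w; first by right.
  by rewrite disjoint_crossing_pairs.
have [ux uy] : [set u; cu] != e /\ [set w; cw] != e.
  by move: nb; rewrite /blocked !negb_or => /and3P [].
apply: usable_pair => //.
- by apply: contraNneq neq12 => -[-> ->].
- case=> x12 E; case: (through _ _ x1u y1w meet1) => [x1u'|y1w'].
    by rewrite -x1u' E eqxx in ux.
  case: (through _ _ x2u y2w meet2) => [x2u'|y2w'].
    by rewrite -x2u' -x12 E eqxx in ux.
  by rewrite x12 y1w' y2w' eqxx in neq12.
- case=> y12 E; case: (through _ _ x1u y1w meet1) => [x1u'|y1w']; last first.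
    by rewrite -y1w' E eqxx in uy.
  case: (through _ _ x2u y2w meet2) => [x2u'|y2w']; last first.
    by rewrite -y2w' -y12 E eqxx in uy.
  by rewrite y12 x1u' x2u' eqxx in neq12.
Qed.

End ClusterPair.

Lemma discrete_crossing (P Q : nat -> Prop) (D : nat) : P 0 -> Q D ->
  (exists k, k <= D /\ (P k <-> Q k)) \/ (exists i, i < D /\ P i /\ Q i.+1).
Proof.
move=> P0 QD; apply: NNPP => none.
have allP k : k <= D -> P k.
  elim: k => [//|k IHk] kD; have Pk := IHk (ltnW kD).
  have nQ : ~ Q k.+1 by move=> Qk; apply: none; right; exists k.
  by apply: NNPP => nP; apply: none; left; exists k.+1; split=> //; tauto.
by apply: none; left; exists D; split=> //; split=> // _; apply: allP.
Qed.

Definition cb_property (T : finType) (G : {set {set T}}) (beta : nat)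
    (cl : {set {set T}}) (center : {set T} -> T) (r v : T) (p : seq T) : Prop :=
  [\/ size p + 2 <= dist G r v + beta,
      size p + 1 = dist G r v + beta /\
        (v = cnt cl center v \/ last_edge r p (cnt cl center v) v)
    | size p = dist G r v + beta /\ v != cnt cl center v /\
        last_edge r p (cnt cl center v) v].

Section Stretch.
Variables (R : realFieldType) (T : finType) (G A M : {set {set T}}) (beta : nat).
Variables (alpha : R) (cl : {set {set T}}) (center : {set T} -> T).
Variables (pick : T -> {set {set T}}) (pp : {set T} -> {set T} -> {set {set T}}).
Local Notation ctr := (cnt cl center).
Local Notation H := (alg2_H A M cl pick pp).

Hypotheses (G_simple : simple_graph G) (A_spanner : additive_spanner G A beta).
Hypothesis cl_ok : clustering G cl center.
Hypothesis A_unclustered :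
  forall u v, [set u; v] \in G -> u \notin cover cl -> [set u; v] \in A.
Hypothesis A_center :
  forall v, v \in cover cl -> v != ctr v -> [set v; ctr v] \in A.
Hypothesis A_cb : forall u v, v \in cover cl -> connected G u v ->
  exists p, is_path A u v p /\ cb_property G beta cl center u v p.
Hypotheses (M_eft : mult_EFT_spanner G M alpha) (pp_spec : alg2_pair_spec G cl pp).
Variables (e : {set T}) (eG : e \in G).

Definition stretch_bound (D : nat) : R :=
  (D%:R + (2 * beta)%:R + Num.max 2 (alpha - 3))%R.

Lemma stretch_bound_nat n D : n <= D + 2 * beta + 2 -> (n%:R <= stretch_bound D)%R.
Proof.
rewrite -(ler_nat R) !natrD /stretch_bound => nD.
have : (2 <= Num.max 2 (alpha - 3) :> R)%R by rewrite le_max lexx.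
lra.
Qed.

Lemma stretch_bound_alpha n D m : n + 3 <= D + 2 * beta + m ->
  (m%:R <= alpha)%R -> (n%:R <= stretch_bound D)%R.
Proof.
rewrite -(ler_nat R) !natrD /stretch_bound => nD m_alpha.
have : (alpha - 3 <= Num.max 2 (alpha - 3) :> R)%R by rewrite le_max lexx orbT.
lra.
Qed.

Lemma walk_A_H a b n : walk (A :\ e) a b n -> walk (H :\ e) a b n.
Proof. by apply: walk_sub; apply: setSD; apply: subsetUr. Qed.

Lemma walk_M_H a b n : walk (M :\ e) a b n -> walk (H :\ e) a b n.
Proof.
by apply: walk_sub; apply: setSD; apply: subset_trans (subsetUl _ A); apply: subsetUr.
Qed.

Lemma pair_edge_in_H C C' f : C \in cl -> C' \in cl -> C' != C -> f \in pp C C' -> f \in H.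
Proof.
move=> Ccl C'cl nC f_pp; rewrite !in_setU; apply/orP; left; apply/orP; left.
apply/orP; right; apply/bigcupP; exists C => //; apply/bigcupP; exists C' => //.
by rewrite C'cl.
Qed.

Lemma clustered_of_edge_notin_H u w : [set u; w] \in G -> [set u; w] \notin H ->
  u \in cover cl.
Proof. by move=> uwG; apply: contraNT => uC; rewrite !in_setU A_unclustered ?orbT. Qed.

Lemma center_walk v : v \in cover cl -> [set v; ctr v] != e -> walk (A :\ e) (ctr v) v 1.
Proof.
move=> vC ve; have [cv|nv] := eqVneq (ctr v) v; first by rewrite -{2}cv; apply: walk0.
by apply: walk1; rewrite in_setD1 setUC ve A_center // eq_sym.
Qed.

Lemma M_detour u w : [set u; w] \in G :\ e ->
  exists m, walk (H :\ e) u w m /\ (m%:R <= alpha)%R.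
Proof.
move=> uw; have [cGe _] := walk_dist (walk1 uw).
have nuw : u != w.
  by move: (G_simple (subsetP (subD1set G e) _ uw)); rewrite cards2; case: (u != w).
have [cM dM] := M_eft.2 e eG u w cGe; have [p [up sp]] := dist_is_path cM.
exists (dist (M :\ e) u w); split; first by rewrite -sp; apply/walk_M_H/is_path_walk.
by rewrite (dist_edge uw nuw) mulr1 in dM.
Qed.

Lemma pair_edge_usable Cu Cw u w : Cu \in cl -> Cw \in cl -> Cu != Cw ->
  u \in Cu -> w \in Cw -> [set u; w] \in G -> ~~ blocked (center Cu) (center Cw) e u w ->
  usable Cu Cw (center Cu) (center Cw) e (pp Cu Cw).
Proof.
move=> Cu_cl Cw_cl nC uu ww uwG nb.
case: cl_ok => /trivIsetP tI _ c_in _; have dC := tI _ _ Cu_cl Cw_cl nC.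
have cuC := c_in _ Cu_cl; have cwC := c_in _ Cw_cl.
have uwD : [set u; w] \in delta G Cu Cw.
  by rewrite inE uwG; apply/exists_inP; exists u => //; apply/exists_inP; exists w.
have [_] := pp_spec Cu_cl Cw_cl nC; cbv zeta.
case: ifP => [_ [f1 [f2 [/deltaP [x1 [y1 [x1u y1w ->]]]
    /deltaP [x2 [y2 [x2u y2w ->]]] dis ->]]] | no_disj].
  exact: usable_disjoint.
case: ifP => [_ [f1 [f2 [f1D f2D neq ->]]] | _ ->]; last by exists u, w.
have meet f : f \in delta G Cu Cw -> ~~ [disjoint f & [set u; w]].
  move=> fD; apply: contraFN no_disj => dis.
  by apply/exists_inP; exists f => //; apply/exists_inP; exists [set u; w].
move: (meet _ f1D) (meet _ f2D) neq.
case/deltaP: f1D => x1 [y1 [x1u y1w ->]]; case/deltaP: f2D => x2 [y2 [x2u y2w ->]].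
move=> meet1 meet2 neq.
exact: (usable_meeting dC cuC cwC uu ww nb x1u x2u y1w y2w neq meet1 meet2).
Qed.

Lemma centers_walk u w : u \in cover cl -> w \in cover cl -> [set u; w] \in G :\ e ->
  [set u; ctr u] != e -> [set w; ctr w] != e -> walk (H :\ e) (ctr u) (ctr w) 3.
Proof.
move=> uC wC uwGe ue we; have [uwe uwG] := setD1P uwGe.
have [same|nC] := eqVneq (pblock cl u) (pblock cl w).
  by rewrite /cnt same; apply: walk0.
have [tI _ _ _] := cl_ok.
have Cu_cl := pblock_mem uC; have Cw_cl := pblock_mem wC.
have uCu : u \in pblock cl u by rewrite mem_pblock.
have wCw : w \in pblock cl w by rewrite mem_pblock.
have [|x [y [xyH xu yw]]] := pair_edge_usable Cu_cl Cw_cl nC uCu wCw uwG.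
  by rewrite /blocked !negb_or; apply/and3P.
rewrite /blocked !negb_or => /and3P [xye xe ye].
have ctr_x : ctr x = ctr u by rewrite /cnt (same_pblock tI xu).
have ctr_y : ctr y = ctr w by rewrite /cnt (same_pblock tI yw).
have xC : x \in cover cl by apply/bigcupP; exists (pblock cl u).
have yC : y \in cover cl by apply/bigcupP; exists (pblock cl w).
have {}xe : [set x; ctr x] != e by rewrite ctr_x.
have {}ye : [set y; ctr y] != e by rewrite ctr_y.
rewrite -ctr_x -ctr_y -[3]/(1 + 1 + 1).
apply: walk_cat (walk_rev (walk_A_H (center_walk yC ye))).
apply: walk_cat (walk_A_H (center_walk xC xe)) (walk1 _).
by rewrite in_setD1 xye (pair_edge_in_H _ _ _ xyH) // eq_sym.
Qed.

Definition route r v k P := [/\ is_path A r v P, dist G r v <= k, size P <= k + beta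
  & v \in cover cl -> cb_property G beta cl center r v P].

Definition avoiding_route r v k := exists2 P, route r v k P & path (adj (A :\ e)) r P.

Lemma route_exists r v k : connected G r v -> dist G r v <= k -> exists P, route r v k P.
Proof.
move=> c_rv d_rv; case: (boolP (v \in cover cl)) => vC.
  have [P [rP cbP]] := A_cb vC c_rv; exists P; split=> //.
  by case: cbP => [|[]|[]]; lia.
have [cA dA] := A_spanner.2 r v c_rv; have [P [rP sP]] := dist_is_path cA.
by exists P; split=> //; [lia | rewrite (negbTE vC)].
Qed.

Lemma route_center_edge r v k P : v \in cover cl -> route r v k P ->
  path (adj (A :\ e)) r P -> [set v; ctr v] = e -> size P + 2 <= k + beta.
Proof.
move=> vC [_ d_rv _ /(_ vC) cbP] avoid ve.
have nv : v != ctr v.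
  by apply/eqP=> vc; move: (G_simple eG); rewrite -ve -vc setUid cards1.
have no_last : ~ last_edge r P (ctr v) v.
  by case/last_edge_walk/(_ avoid); rewrite adjD1 setUC ve eqxx.
case: cbP => [|[_ [vc|//]]|[_ [_ //]]]; first lia.
by rewrite -vc eqxx in nv.
Qed.

Lemma route_to_center r v k P : v \in cover cl -> route r v k P ->
  path (adj (A :\ e)) r P -> [set v; ctr v] != e ->
  exists n, walk (A :\ e) r (ctr v) n /\ n + 1 <= k + beta.
Proof.
move=> vC [rP d_rv _ /(_ vC) cbP] avoid ve.
have rv := is_path_avoid_walk rP avoid.
case: cbP => [sP|[sP [vc|lst]]|[sP [_ lst]]].
- by exists (size P + 1); split; [apply: walk_cat rv (walk_rev (center_walk vC ve)) | lia].
- by exists (size P); split; [rewrite -vc | lia].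
- by have [_ P0 rc] := last_edge_walk lst avoid; exists (size P).-1; split; [|lia].
- by have [_ P0 rc] := last_edge_walk lst avoid; exists (size P).-1; split; [|lia].
Qed.

Lemma meet_walk s t v k l : connected G s v -> dist G s v <= k ->
  connected G t v -> dist G t v <= l ->
  (avoiding_route s v k <-> avoiding_route t v l) ->
  exists n, walk (A :\ e) s t n /\ n <= k + l + 2 * beta.
Proof.
move=> cs ds ct dt same.
case: (classic (avoiding_route s v k)) => [avs|navs].
  have [P [sP _ szP _] aP] := avs; have [Q [tQ _ szQ _] aQ] := same.1 avs.
  exists (size P + size Q); split; last by lia.
  exact: walk_cat (is_path_avoid_walk sP aP) (walk_rev (is_path_avoid_walk tQ aQ)).
have [P rP] := route_exists cs ds; have [Q rQ] := route_exists ct dt.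
have [sP _ szP _] := rP; have [tQ _ szQ _] := rQ.
have nP : ~~ path (adj (A :\ e)) s P by apply/negP=> aP; apply: navs; exists P.
have nQ : ~~ path (adj (A :\ e)) t Q by apply/negP=> aQ; apply: navs; apply/same; exists Q.
have [n [st hn]] := crossing_paths_walk sP nP tQ nQ.
by exists n; split=> //; lia.
Qed.

Lemma cross_walk s t u w i j : avoiding_route s u i -> avoiding_route t w j ->
  [set u; w] \in G :\ e ->
  exists n, walk (H :\ e) s t n /\ (n%:R <= stretch_bound (i + j).+1)%R.
Proof.
move=> [P sP aP] [Q tQ aQ] uwGe; have [uwe uwG] := setD1P uwGe.
have [sP' _ szP _] := sP; have [tQ' _ szQ _] := tQ.
have wP := walk_A_H (is_path_avoid_walk sP' aP).
have wQ := walk_rev (walk_A_H (is_path_avoid_walk tQ' aQ)).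
case: (boolP ([set u; w] \in H)) => uwH.
  exists (size P + 1 + size Q); split.
    by apply: walk_cat wQ; apply: walk_cat wP (walk1 _); rewrite in_setD1 uwe.
  by apply: stretch_bound_nat; clear -szP szQ; lia.
have uC := clustered_of_edge_notin_H uwG uwH.
have wC : w \in cover cl by apply: (clustered_of_edge_notin_H (w := u)); rewrite setUC.
have via_M : size P + 2 <= i + beta \/ size Q + 2 <= j + beta ->
    exists n, walk (H :\ e) s t n /\ (n%:R <= stretch_bound (i + j).+1)%R.
  move=> short; have [m [uw_m m_alpha]] := M_detour uwGe.
  exists (size P + m + size Q); split; first exact: walk_cat (walk_cat wP uw_m) wQ.
  apply: (stretch_bound_alpha _ m_alpha); clear -short szP szQ; case: short; lia.
have [ue|ue] := eqVneq [set u; ctr u] e.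
  by apply: via_M; left; apply: route_center_edge uC sP aP ue.
have [we|we] := eqVneq [set w; ctr w] e.
  by apply: via_M; right; apply: route_center_edge wC tQ aQ we.
have [a [sa ha]] := route_to_center uC sP aP ue.
have [b [tb hb]] := route_to_center wC tQ aQ we.
exists (a + 3 + b); split; last by apply: stretch_bound_nat; clear -ha hb; lia.
apply: walk_cat (walk_rev (walk_A_H tb)).
exact: walk_cat (walk_A_H sa) (centers_walk uC wC uwGe ue we).
Qed.

Lemma alg2_H_stretch s t : connected (G :\ e) s t ->
  connected (H :\ e) s t /\
  ((dist (H :\ e) s t)%:R <= stretch_bound (dist (G :\ e) s t))%R.
Proof.
move=> cst; set D := dist (G :\ e) s t.
suff [n [st hn]] : exists n, walk (H :\ e) s t n /\ (n%:R <= stretch_bound D)%R.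
  by have [cH dH] := walk_dist st; split=> //; apply: le_trans hn; rewrite ler_nat.
have [p [/and3P [sp /eqP pt _] sz]] := dist_is_path cst; rewrite -/D in sz.
pose z k := nth s (s :: p) k.
have zD : z D = t by rewrite /z -sz -(last_nth s) pt.
have near k : k <= D -> [/\ connected G s (z k), dist G s (z k) <= k,
    connected G t (z k) & dist G t (z k) <= D - k].
  rewrite -sz => kp; have [w1 w2] := walk_along sp kp; rewrite pt in w2.
  have [c1 d1] := walk_dist (walk_sub (subD1set G e) w1).
  by have [c2 d2] := walk_dist (walk_sub (subD1set G e) (walk_rev w2)).
have start : avoiding_route s (z 0) 0.
  have [c1 d1 _ _] := near 0 (leq0n D); have [P rP] := route_exists c1 d1.
  by exists P => //; have [/is_path_loop_nil -> _ _ _] := rP.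
have finish : avoiding_route t (z D) (D - D).
  have [_ _ c2 d2] := near D (leqnn D); have [Q rQ] := route_exists c2 d2.
  by exists Q => //; have [+ _ _ _] := rQ; rewrite zD => /is_path_loop_nil ->.
have [[k [kD same]] | [i [iD [s_i t_i]]]] :=
  discrete_crossing (P := fun k => avoiding_route s (z k) k)
    (Q := fun k => avoiding_route t (z k) (D - k)) start finish.
  have [c1 d1 c2 d2] := near k kD; have [n [st hn]] := meet_walk c1 d1 c2 d2 same.
  by exists n; split; [apply: walk_A_H | apply: stretch_bound_nat; clear -kD hn; lia].
have uw : [set z i; z i.+1] \in G :\ e by apply: (pathP s sp); rewrite sz.
have [n [st hn]] := cross_walk s_i t_i uw.
by exists n; split=> //; have -> : D = (i + (D - i.+1)).+1 by clear -iD; lia.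
Qed.

End Stretch.

Lemma card_bigcup_le (T I : finType) (P : pred I) (F : I -> {set T}) :
  #|\bigcup_(i | P i) F i| <= \sum_(i | P i) #|F i|.
Proof.
apply: (big_ind2 (fun (U : {set T}) n => #|U| <= n)) => [|U1 n1 U2 n2 le1 le2|//].
  by rewrite cards0.
exact: leq_trans (leq_card_setU U1 U2) (leq_add le1 le2).
Qed.

Section Size.
Variable T : finType.
Variables (G A M : {set {set T}}) (cl : {set {set T}}) (center : {set T} -> T).
Variables (pick : T -> {set {set T}}) (pp : {set T} -> {set T} -> {set {set T}}).

Lemma card_pick_le1 v : alg2_pick_spec G cl center pick -> v \in cover cl -> #|pick v| <= 1.
Proof.
move=> pick_spec vC; have := pick_spec v vC.
by case: ifP => _ => [[x _ [_ ->]] | ->]; rewrite ?cards1 ?cards0.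
Qed.

Lemma card_pp_le2 C C' : alg2_pair_spec G cl pp -> C \in cl -> C' \in cl -> C != C' ->
  #|pp C C'| <= 2.
Proof.
move=> pp_spec Ccl C'cl nC; have [_] := pp_spec C C' Ccl C'cl nC; cbv zeta.
case: ifP => [_ [f1 [f2 [_ _ _ ->]]]|_]; first by rewrite cards2; case: (f1 != f2).
case: ifP => [_ [f1 [f2 [_ _ _ ->]]]|no_two ->]; first by rewrite cards2; case: (f1 != f2).
apply: leq_trans (_ : 1 <= 2) => //; apply/card_le1_eqP => f1 f2 f1D f2D.
apply/eqP; apply: contraFT no_two => nf.
by apply/exists_inP; exists f2 => //; apply/exists_inP; exists f1.
Qed.

Lemma card_alg2_H : alg2_pick_spec G cl center pick -> alg2_pair_spec G cl pp ->
  #|alg2_H A M cl pick pp| <= 3 * (#|A| + #|M| + #|T| + #|cl| ^ 2).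
Proof.
move=> pick_spec pp_spec.
have picks : #|\bigcup_(v in cover cl) pick v| <= #|T|.
  apply: leq_trans (card_bigcup_le _ _) _.
  apply: leq_trans (leq_sum _ (fun v vC => card_pick_le1 pick_spec vC)) _.
  by rewrite sum1_card max_card.
have pairs : #|\bigcup_(C in cl) \bigcup_(C' in cl | C' != C) pp C C'|
    <= #|cl| * (#|cl| * 2).
  apply: leq_trans (card_bigcup_le _ _) _; rewrite -sum_nat_const.
  apply: leq_sum => C Ccl.
  apply: leq_trans (card_bigcup_le _ _) _; rewrite -sum_nat_const big_mkcondr /=.
  apply: leq_sum => C' C'cl; case: eqP => [_ //|/eqP nC].
  by apply: card_pp_le2; rewrite // eq_sym.
have cardU4 (X Y Z W : {set {set T}}) :
    #|X :|: Y :|: Z :|: W| <= #|X| + #|Y| + #|Z| + #|W|.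
  apply: leq_trans (leq_card_setU _ W) _; rewrite leq_add2r.
  by apply: leq_trans (leq_card_setU _ Z) _; rewrite leq_add2r leq_card_setU.
rewrite /alg2_H /alg2_Eprime; apply: leq_trans (cardU4 _ _ _ _) _.
by move: picks pairs; rewrite expnS expn1; lia.
Qed.

End Size.

Theorem theorem3 :
  exists c : nat,
  forall (R : realFieldType) (T : finType) (G A M : {set {set T}})
    (beta : nat) (alpha : R) (cl : {set {set T}}) (center : {set T} -> T)
    (pick : T -> {set {set T}}) (pp : {set T} -> {set T} -> {set {set T}}),
    simple_graph G ->
    clustering_based G A beta cl center ->
    mult_EFT_spanner G M alpha ->
    alg2_pick_spec G cl center pick ->
    alg2_pair_spec G cl pp ->
    let H := alg2_H A M cl pick pp in
    #|H| <= c * (#|A| + #|M| + #|T| + #|cl| ^ 2) /\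
    (forall e, e \in G -> forall s t, connected (G :\ e) s t ->
       connected (H :\ e) s t /\
       ((dist (H :\ e) s t)%:R <=
          (dist (G :\ e) s t)%:R + (2 * beta)%:R + Num.max 2 (alpha - 3)
        :> R)%R).
Proof.
exists 3 => R T G A M beta alpha cl center pick pp G_simple
  [A_spanner cl_ok A_unclustered A_center A_cb] M_eft pick_spec pp_spec H.
split; first exact: card_alg2_H pick_spec pp_spec.
move=> e eG s t.
exact: (alg2_H_stretch pick G_simple A_spanner cl_ok A_unclustered A_center A_cb
  M_eft pp_spec eG).
Qed.
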